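(* Let $t\ge2$, $n\ge1$ and let $\lambda$ be a partition of length at most $tn+1$. Then the $t$-core of $\lambda$ is $(1,0,0)$-asymmetric if and only if $n_0(\lambda,tn+1)=n+1$ and $n_i(\lambda,tn+1)+n_{t-i}(\lambda,tn+1)=2n$ for all $1\le i\le t-1$.
   Context: For a partition $\lambda$ of length at most $\ell$, $\beta_i(\lambda,\ell)=\lambda_i+\ell-i$ ($1\le i\le\ell$) and $n_i(\lambda,\ell)$ is the number of $\beta_j(\lambda,\ell)$ congruent to $i$ mod $t$. The $t$-core is the usual one (remove all rim hooks of length $t$). A partition $\mu$ of Frobenius rank $r$ (largest $j$ with $\mu_j\ge j$) is $(1,0,0)$-asymmetric if its Frobenius coordinates $(\alpha\mid\beta)$, $\alpha_i=\mu_i-i$, $\beta_i=\mu'_i-i$ ($1\le i\le r$, $\mu'$ the conjugate), satisfy $\beta_i=\alpha_i+1$ for all $i$; the empty partition is $(1,0,0)$-asymmetric. *)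

(* Partitions are finite sequences of natural numbers;
   rows and columns of Young diagrams are 0-indexed internally. *)
From mathcomp Require Import all_boot.
Set Implicit Arguments. Unset Strict Implicit. Unset Printing Implicit Defensive.

Definition is_partition (l : seq nat) : bool :=
  sorted geq l && all (fun x => 0 < x) l.

(* the i-th part, 1-indexed (0 beyond the length) *)
Definition part (l : seq nat) (i : nat) : nat := nth 0 l i.-1.

(* cells of the Young diagram: (row, column), 0-indexed *)
Definition in_diag (l : seq nat) (c : nat * nat) : bool := c.2 < nth 0 l c.1.

Definition contained (m l : seq nat) : Prop := forall i, nth 0 m i <= nth 0 l i.

Definition in_skew (l m : seq nat) (c : nat * nat) : bool :=
  in_diag l c && ~~ in_diag m c.

Definition adjacent (c d : nat * nat) : bool :=
  ((c.1 == d.1) && ((c.2 == d.2.+1) || (d.2 == c.2.+1))) ||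
  ((c.2 == d.2) && ((c.1 == d.1.+1) || (d.1 == c.1.+1))).

Definition skew_connected (l m : seq nat) : Prop :=
  forall a b, in_skew l m a -> in_skew l m b ->
    exists p : seq (nat * nat),
      [/\ path adjacent a p, last a p = b & all (in_skew l m) p].

Definition skew_no_2x2 (l m : seq nat) : Prop :=
  forall i j, ~ [&& in_skew l m (i, j), in_skew l m (i.+1, j),
                   in_skew l m (i, j.+1) & in_skew l m (i.+1, j.+1)].

Definition remove_rim_hook (t : nat) (l m : seq nat) : Prop :=
  [/\ is_partition m, contained m l, sumn l = sumn m + t,
      skew_connected l m & skew_no_2x2 l m].

Inductive rim_hook_reach (t : nat) : seq nat -> seq nat -> Prop :=
| rhr_refl l : rim_hook_reach t l l
| rhr_step l m k : remove_rim_hook t l m -> rim_hook_reach t m k ->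
                   rim_hook_reach t l k.

Definition is_tcore (t : nat) (l k : seq nat) : Prop :=
  rim_hook_reach t l k /\ forall m, ~ remove_rim_hook t k m.

Definition beta (l : seq nat) (ell i : nat) : nat := part l i + ell - i.

Definition nres (t : nat) (l : seq nat) (ell k : nat) : nat :=
  count (fun j => beta l ell j %% t == k %% t) (iota 1 ell).

Definition conj_part (l : seq nat) (i : nat) : nat := count (fun x => i <= x) l.

Definition frob_rank (l : seq nat) : nat :=
  \max_(j < (size l).+1 | j <= part l j) j.

Definition frob_alpha (l : seq nat) (i : nat) : nat := part l i - i.
Definition frob_beta (l : seq nat) (i : nat) : nat := conj_part l i - i.

Definition asym100 (l : seq nat) : Prop :=
  forall i, 1 <= i <= frob_rank l -> frob_beta l i = (frob_alpha l i).+1.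

(* Put L = t n + 1 and read the beta-numbers beta_j(lambda, L) as the beads of
   an abacus with t runners.  Removing a rim hook of length t moves one bead t
   positions down, so the residue counts n_i of lambda and of its t-core kappa
   agree, and the beads of kappa are flush on every runner: runner r holds
   exactly the positions r + q t with q < n_r.
   On the other hand kappa is (1,0,0)-asymmetric iff its diagram is mapped into
   itself by the cell map (i, j) |-> (j + 1, i), i.e. iff its bead set is
   complementary-symmetric about L - 1: L - 1 is a bead, exactly one of
   L - 1 - u and L - 1 + u is a bead for 0 < u < L, and nothing lies beyond
   2 L - 2.  The reflection x |-> 2 t n - x swaps runners i and t - i and maps
   runner 0 to itself around level n, so on flush runners this symmetry says
   exactly n_0 = n + 1 and n_i + n_(t - i) = 2 n. *)

From mathcomp Require Import all_boot zify.
From Stdlib Require Import Classical_Prop.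
Set Implicit Arguments. Unset Strict Implicit. Unset Printing Implicit Defensive.

(** * Partitions and Frobenius coordinates *)

Lemma nth_partition_anti l i j : is_partition l -> i <= j -> nth 0 l j <= nth 0 l i.
Proof.
move=> /andP[l_sorted _] le_ij.
have [lt_jl | ge_jl] := ltnP j (size l); last by rewrite nth_default.
have geq_trans : transitive geq by move=> a b c h1 h2; apply: leq_trans h2 h1.
by apply: (sorted_leq_nth geq_trans leqnn 0 l_sorted) => //; rewrite inE; lia.
Qed.

Lemma nth_partition_gt0 l j : is_partition l -> j < size l -> 0 < nth 0 l j.
Proof. by move=> /andP[_ /(all_nthP 0) l_pos] /l_pos. Qed.

Lemma ltn_conj_part l i p :
  sorted geq l -> 0 < i -> (p < conj_part l i) = (i <= nth 0 l p).
Proof.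
rewrite /conj_part; elim: l p => [|x l IHl] p l_sorted i_gt0 /=.
  by rewrite nth_nil; lia.
have x_ge : all (geq x) l.
  by apply: order_path_min l_sorted => a b c h1 h2; apply: leq_trans h2 h1.
have [le_ix | lt_xi] /= := leqP i x.
  by case: p => [|p] //=; rewrite add1n ltnS; apply: IHl (path_sorted l_sorted) i_gt0.
have -> : count (fun y => i <= y) l = 0.
  apply/eqP; rewrite -leqn0 leqNgt -has_count.
  by apply/hasPn => y /(allP x_ge) /=; lia.
case: p => [|p] /=; first lia.
have [lt_pl | ge_pl] := ltnP p (size l); last by rewrite nth_default //; lia.
by have /= := allP x_ge _ (mem_nth 0 lt_pl); lia.
Qed.

Lemma leq_frob_rank l i :
  is_partition l -> 0 < i -> (i <= frob_rank l) = (i <= part l i).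
Proof.
move=> l_part i_gt0; apply/idP/idP.
  apply: contraLR; rewrite -!ltnNge => lt_part_i.
  suff : frob_rank l <= i.-1 by lia.
  apply/bigmax_leqP => j le_j_part.
  have [le_ij | lt_ji] := leqP i j; last lia.
  have : part l j <= part l i by apply: nth_partition_anti => //; lia.
  lia.
move=> le_i_part; have [le_il | lt_li] := leqP i (size l); last first.
  by move: le_i_part; rewrite /part nth_default; lia.
have lt_i_ord : i < (size l).+1 by [].
exact: (@leq_bigmax_cond _ (fun j : 'I_(size l).+1 => j <= part l j) val (Ordinal lt_i_ord)).
Qed.

(* In 1-indexed (row, column) coordinates: the cell (i, j) with i <= j lies in
   the diagram iff the cell (j + 1, i) does. *)
Definition shift_symmetric (l : seq nat) : Prop :=
  forall i j, 1 <= i <= j -> (j <= part l i) = (i <= part l j.+1).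

Lemma asym100_shift_symmetric l : is_partition l -> asym100 l <-> shift_symmetric l.
Proof.
move=> l_part; have l_sorted : sorted geq l by case/andP: l_part.
split=> [asym i j /andP[i_gt0 le_ij] | sym i /andP[i_gt0 le_i_rank]].
  have [le_i_part | lt_part_i] := leqP i (part l i).
    have := asym i; rewrite i_gt0 leq_frob_rank // => /(_ le_i_part).
    rewrite /frob_beta /frob_alpha => beta_i.
    have conj_i : conj_part l i = (part l i).+1 by lia.
    by have := ltn_conj_part j l_sorted i_gt0; rewrite conj_i ltnS.
  have : part l j.+1 <= part l i by apply: nth_partition_anti; lia.
  by move=> ?; apply/idP/idP; lia.
have le_i_part : i <= part l i by rewrite -leq_frob_rank.
suff conj_i : conj_part l i = (part l i).+1 by rewrite /frob_beta /frob_alpha; lia.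
have ltn_conj p : (p < conj_part l i) = (p < (part l i).+1).
  rewrite ltn_conj_part //; have [lt_pi | le_ip] := ltnP p i.
    have : part l i <= nth 0 l p by apply: nth_partition_anti; lia.
    by move=> ?; apply/idP/idP; lia.
  by rewrite ltnS sym // i_gt0.
apply/eqP; rewrite eqn_leq; apply/andP; split; last by rewrite ltn_conj.
by rewrite leqNgt ltn_conj ltnn.
Qed.

(** * Beta-numbers on the abacus *)

Lemma count_iota_all (a : pred nat) m n :
  (forall j, m <= j < m + n -> a j) -> count a (iota m n) = n.
Proof.
move=> all_a; rewrite -[RHS](size_iota m n) -count_predT.
by apply: eq_in_count => j; rewrite mem_iota => /all_a ->.
Qed.

Lemma count_iota_none (a : pred nat) m n :
  (forall j, m <= j < m + n -> ~~ a j) -> count a (iota m n) = 0.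
Proof.
move=> none_a; rewrite -(count_pred0 (iota m n)).
by apply: eq_in_count => j; rewrite mem_iota => /none_a /negbTE ->.
Qed.

Lemma subn_eq_from_leq A E c :
  (forall i, 0 < i -> (i <= A) = (i + c <= E)) -> A = E - c.
Proof.
move=> thresholds; apply/eqP; rewrite eqn_leq; apply/andP; split.
  by case: A thresholds => // A /(_ A.+1 isT); rewrite leqnn => /esym; lia.
case E_c: (E - c) => [//|d].
by rewrite thresholds //; lia.
Qed.

Definition beads_from (k : seq nat) (L v : nat) : nat :=
  count (fun j => v <= beta k L j) (iota 1 L).

Definition beads_at (k : seq nat) (L x : nat) : nat :=
  count (fun j => beta k L j == x) (iota 1 L).

(* At x = y = c the first clause forces b c = 1. *)
Definition mirror_about (b : nat -> nat) (c : nat) : Prop :=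
  (forall x y, x + y = c.*2 -> b x + b y = 1 + (x == y)) /\
  (forall x, c.*2 < x -> b x = 0).

Section Beads.

Variables (k : seq nat) (L : nat).

Local Notation N := (beads_from k L).
Local Notation b := (beads_at k L).

Lemma beads_from_le v : N v <= L.
Proof. by rewrite -[leqRHS](size_iota 1 L) count_size. Qed.

Lemma beads_from0 : N 0 = L.
Proof. exact: count_iota_all. Qed.

Lemma beads_fromS v : N v = b v + N v.+1.
Proof.
rewrite /beads_from /beads_at; elim: (iota 1 L) => //= j s ->.
by case: (ltngtP v (beta k L j)) => /=; lia.
Qed.

Lemma beads_from_anti v w : v <= w -> N w <= N v.
Proof. by move=> le_vw; apply: sub_count => j /=; lia. Qed.

Lemma beads_at_le_from x : b x <= N x.
Proof. by apply: sub_count => j /= /eqP ->. Qed.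

Lemma mirror_of_beads_from : 0 < L ->
  (forall u, u < L -> N (L.-1 - u) = N (L + u) + u.+1) -> mirror_about b L.-1.
Proof.
move=> L_gt0 reflN.
have reflN' x : x <= L.-1 -> N x = N (L.-1.*2 - x).+1 + (L.-1 - x).+1.
  move=> le_x; have := reflN (L.-1 - x) ltac:(lia).
  by rewrite subKn // (_ : L + _ = (L.-1.*2 - x).+1) //; lia.
split=> [x y | x lt_x]; last first.
  have := reflN' 0 (leq0n _); rewrite beads_from0 subn0 => N_top.
  by have := beads_from_anti lt_x; have := beads_at_le_from x; lia.
wlog le_xy : x y / x <= y => [wlog_xy | sum_xy].
  have [|lt_yx] := leqP x y; first exact: wlog_xy.
  by move=> sum; rewrite addnC eq_sym wlog_xy 1?addnC // ltnW.
have -> : y = L.-1.*2 - x by lia.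
have [-> | ne_x] := eqVneq x L.-1.
  have := reflN' _ (leqnn L.-1); have := beads_fromS L.-1.
  by rewrite -addnn addnK eqxx prednK //; lia.
have lt_xc : x < L.-1 by lia.
have := reflN' x; have := reflN' x.+1 lt_xc.
have := beads_fromS x; have := beads_fromS (L.-1.*2 - x).
rewrite (_ : (L.-1.*2 - x.+1).+1 = L.-1.*2 - x); last lia.
by rewrite (_ : (x == L.-1.*2 - x) = false); [lia | apply/eqP; lia].
Qed.

Lemma beads_from_of_mirror :
  mirror_about b L.-1 -> forall u, u < L -> N (L.-1 - u) = N (L + u) + u.+1.
Proof.
case=> pairs _; have b_center : b L.-1 = 1.
  by have := pairs L.-1 L.-1; rewrite addnn eqxx; lia.
elim=> [|u IHu] lt_uL; first by rewrite subn0 addn0 beads_fromS prednK // b_center addnC.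
have := pairs (L.-1 - u.+1) (L + u); have := IHu (ltnW lt_uL).
have := beads_fromS (L.-1 - u.+1); have := beads_fromS (L + u).
rewrite (_ : (L.-1 - u.+1).+1 = L.-1 - u) ?addnS; last lia.
by case: eqP; lia.
Qed.

Lemma beads_from_mirror : 0 < L ->
  (forall u, u < L -> N (L.-1 - u) = N (L + u) + u.+1) <-> mirror_about b L.-1.
Proof. by move=> L_gt0; split=> [/mirror_of_beads_from | /beads_from_of_mirror]; apply. Qed.

Hypothesis k_part : is_partition k.

Lemma beta_gap i j : 0 < i -> i <= j -> j <= L -> beta k L j + (j - i) <= beta k L i.
Proof.
move=> i_gt0 le_ij le_jL; rewrite /beta.
have : part k j <= part k i by apply: nth_partition_anti; lia.
lia.
Qed.

Lemma leq_beads_from v i : 0 < i <= L -> (i <= N v) = (v <= beta k L i).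
Proof.
case/andP=> i_gt0 le_iL; rewrite /beads_from.
have [le_v_beta | lt_beta_v] := leqP v (beta k L i).
  rewrite (_ : iota 1 L = iota 1 i ++ iota (1 + i) (L - i)); last first.
    by rewrite -iotaD subnKC.
  rewrite count_cat count_iota_all; first lia.
  by move=> j /andP[j_gt0 le_ji]; have := beta_gap j_gt0 le_ji le_iL; lia.
rewrite (_ : iota 1 L = iota 1 i.-1 ++ iota (1 + i.-1) (L - i.-1)); last first.
  by rewrite -iotaD subnKC //; lia.
rewrite count_cat (@count_iota_none _ (1 + i.-1)); last first.
  move=> j /andP[le_ij le_jL]; rewrite -ltnNge.
  by have := @beta_gap i j i_gt0 ltac:(lia) ltac:(lia); lia.
have := count_size (fun j => v <= beta k L j) (iota 1 i.-1).
by rewrite size_iota; lia.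
Qed.

Lemma beads_from_ge v : v < L -> L - v <= N v.
Proof. by move=> lt_vL; rewrite leq_beads_from /beta; lia. Qed.

Lemma beads_from_reflect : 0 < L ->
  (forall u, N (L + u) = N (L.-1 - u) - u.+1) <->
  (forall u, u < L -> N (L.-1 - u) = N (L + u) + u.+1).
Proof.
move=> L_gt0; split=> [symN u lt_uL | reflN u].
  have := beads_from_ge (_ : L.-1 - u < L); rewrite symN; lia.
have [lt_uL | le_Lu] := ltnP u L; first by rewrite reflN // addnK.
have := reflN L.-1; rewrite subnn beads_from0 => /(_ ltac:(lia)) N_top.
have := beads_from_anti (_ : L + L.-1 <= L + u).
by rewrite (_ : L.-1 - u = 0) ?beads_from0; lia.
Qed.

Hypothesis size_k : size k <= L.

Lemma in_diag_beads_from i j :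
  0 < i -> 0 < j -> (j <= part k i) = (i <= N (L + j - i)).
Proof.
move=> i_gt0 j_gt0; have [le_iL | lt_Li] := leqP i L.
  by rewrite leq_beads_from ?i_gt0 // /beta; apply/idP/idP; lia.
have -> : part k i = 0 by rewrite /part nth_default //; lia.
by have le_NL := beads_from_le (L + j - i); apply/idP/idP; lia.
Qed.

Lemma shift_symmetric_beads_from :
  shift_symmetric k <-> forall u, N (L + u) = N (L.-1 - u) - u.+1.
Proof.
have cells i u : 0 < i ->
    (i + u <= part k i) = (i <= N (L + u)) /\
    (i <= part k (i + u).+1) = (i + u.+1 <= N (L.-1 - u)).
  move=> i_gt0; rewrite !in_diag_beads_from ?addnS //; last lia.
  by split; congr (_ <= N _); lia.
split=> [sym u | symN i j /andP[i_gt0 le_ij]].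
  apply: subn_eq_from_leq => i i_gt0; have [<- <-] := cells i u i_gt0.
  by rewrite sym // i_gt0 leq_addr.
have [] := cells i (j - i) i_gt0; rewrite subnKC // => -> ->.
by rewrite symN leq_psubRL // addnC.
Qed.

End Beads.

(** * Runners *)

Definition runners_flush (t : nat) (k : seq nat) (L : nat) : Prop :=
  forall x, 0 < beads_at k L x -> t <= x -> 0 < beads_at k L (x - t).

Lemma sum_eq_runner x r t M : r < t ->
  \sum_(q < M) (x == r + q * t) = (x %% t == r) && (x %/ t < M).
Proof.
move=> lt_rt; have t_gt0 : 0 < t by lia.
elim: M => [|M IHM]; first by rewrite big_ord0 ltn0 andbF.
rewrite big_ord_recr /= IHM.
have -> : (x == r + M * t) = (x %% t == r) && (x %/ t == M).
  apply/eqP/andP => [-> | [/eqP mod_x /eqP div_x]].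
    by rewrite addnC modnMDl divnMDl // modn_small // divn_small // addn0.
  by rewrite (divn_eq x t) mod_x div_x addnC.
by case: (x %% t == r) => //=; case: ltngtP; lia.
Qed.

Lemma sum_count_runner (f : nat -> nat) (s : seq nat) r t M :
  r < t -> (forall j, j \in s -> f j < M) ->
  \sum_(q < M) count (fun j => f j == r + q * t) s = count (fun j => f j %% t == r) s.
Proof.
move=> lt_rt; elim: s => [|x s IHs] f_lt /=; first by rewrite big1.
rewrite big_split /= sum_eq_runner // IHs => [|j s_j]; last by rewrite f_lt // inE s_j orbT.
by rewrite (leq_ltn_trans (leq_div _ _) (f_lt x (mem_head _ _))) andbT.
Qed.

Lemma sum_ltn M z : \sum_(i < M) (i < z) = minn M z.
Proof.
elim: M => [|M IHM]; first by rewrite big_ord0 min0n.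
by rewrite big_ord_recr /= IHM; case: (ltnP M z) => /=; lia.
Qed.

Lemma homo_leq_anti (f : nat -> nat) :
  (forall i, f i.+1 <= f i) -> {homo f : i j / i <= j >-> j <= i}.
Proof.
move=> f_anti; apply: (homo_leq (r := fun a b => b <= a)) => // y x z h1 h2.
exact: leq_trans h2 h1.
Qed.

Lemma antitone01_threshold (f : nat -> nat) M :
  (forall q, f q <= 1) -> (forall q, f q.+1 <= f q) -> f M = 0 ->
  forall q, f q = (q < \sum_(i < M) f i).
Proof.
move=> f_le1 f_anti fM.
have f_homo := homo_leq_anti f_anti.
have [z /eqP fz z_min] := ex_minnP (ex_intro (fun z => f z == 0) M (introT eqP fM)).
have f_step i : f i = (i < z).
  have [lt_iz | le_zi] := ltnP i z; last by have := f_homo _ _ le_zi; lia.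
  by have := f_le1 i; have := z_min i; case: (f i) => [|[|]] // /(_ isT); lia.
have le_zM : z <= M by apply: z_min; rewrite fM.
move=> q; rewrite f_step (eq_bigr (fun i : 'I_M => nat_of_bool (i < z))) => [|i _] //.
by rewrite sum_ltn; congr (_ < _); lia.
Qed.

Section Runners.

Variables (t : nat) (k : seq nat) (L : nat).
Hypothesis k_part : is_partition k.

Local Notation b := (beads_at k L).

Lemma beads_at_le1 x : b x <= 1.
Proof.
have -> : b x = count (pred1 x) (map (beta k L) (iota 1 L)) by rewrite count_map.
rewrite count_uniq_mem; first by case: (_ \in _).
rewrite map_inj_in_uniq ?iota_uniq // => i j; rewrite !mem_iota => i_in j_in eq_beta.
case: (ltngtP i j) => // [lt_ij | lt_ji].
  by have := beta_gap k_part (_ : 0 < i) (ltnW lt_ij) (_ : j <= L); lia.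
by have := beta_gap k_part (_ : 0 < j) (ltnW lt_ji) (_ : i <= L); lia.
Qed.

Lemma beta_le j : beta k L j <= L + nth 0 k 0.
Proof. by have := nth_partition_anti (j := j.-1) k_part (leq0n _); rewrite /beta /part; lia. Qed.

Lemma beads_at_high x : L + nth 0 k 0 < x -> b x = 0.
Proof.
by move=> lt_x; apply: count_iota_none => j _; have := beta_le j; apply: contraTN => /eqP; lia.
Qed.

Hypothesis flush : runners_flush t k L.

Lemma beads_at_runner r q : r < t -> b (r + q * t) = (q < nres t k L r).
Proof.
move=> lt_rt; set M := L + nth 0 k 0 + 1.
have -> : nres t k L r = \sum_(q < M) b (r + q * t).
  rewrite /nres (modn_small lt_rt) sum_count_runner // => j _.
  by have := beta_le j; rewrite /M; lia.
apply: (antitone01_threshold (f := fun q => b (r + q * t))) => [i | i |].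
- exact: beads_at_le1.
- have := beads_at_le1 (r + i.+1 * t); have := beads_at_le1 (r + i * t).
  have [bead_i1 | ] := ltnP 0 (b (r + i.+1 * t)); last lia.
  have := flush bead_i1; rewrite mulSn addnCA addKn => /(_ (leq_addr _ _)); lia.
- by apply: beads_at_high; rewrite /M; nia.
Qed.

End Runners.

Lemma complementary_thresholds a b N : a <= N -> b <= N ->
  (forall q q', (q + q').+1 = N -> (q < a) + (q' < b) = 1) <-> a + b = N.
Proof.
move=> le_aN le_bN; split=> [compl | sum_ab q q' sum_q]; last first.
  by case: ltnP; case: ltnP => /=; lia.
have lower : a < N -> N - a <= b.
  by move=> lt_aN; have := compl a (N - a).-1 ltac:(lia); rewrite ltnn; case: ltnP => /=; lia.
have upper : 0 < a -> b <= N - a.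
  by move=> a_gt0; have := compl a.-1 (N - a) ltac:(lia); case: ltnP; case: ltnP => /=; lia.
by case: (posnP a) => [a0 | /upper]; case: (ltnP a N) => [/lower | ]; lia.
Qed.

Lemma central_threshold a n : a <= n.*2.+1 ->
  (forall q q', q + q' = n.*2 -> (q < a) + (q' < a) = 1 + (q == q')) <-> a = n.+1.
Proof.
move=> le_a; split=> [pairs | -> q q' sum_q]; last first.
  by case: ltnP; case: ltnP; case: eqP => /=; lia.
have := pairs n n (addnn n); rewrite eqxx; case: ltnP => /= [lt_na _ | ]; last lia.
have := pairs a.-1 (n.*2 - a.-1) ltac:(lia).
by case: ltnP; case: ltnP; case: eqP => /=; lia.
Qed.

Lemma runner_pair_neq t n r q y : 0 < r < t -> r + q * t + y = (n * t).*2 -> r + q * t != y.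
Proof.
move=> /andP[r_gt0 lt_rt] sum_xy; apply/eqP => eq_xy.
have : (r + q * t) %% t = (n * t) %% t by congr (_ %% t); lia.
by rewrite addnC modnMDl modnMl modn_small //; lia.
Qed.

Section MirrorRunners.

Variables (b a : nat -> nat) (t n : nat).
Hypotheses (t_gt0 : 0 < t) (b_runner : forall r q, r < t -> b (r + q * t) = (q < a r)).

Lemma mirror_runner_counts :
  mirror_about b (n * t) -> a 0 = n.+1 /\ forall i, 0 < i < t -> a i + a (t - i) = n.*2.
Proof.
case=> pairs high; have b0 q : b (q * t) = (q < a 0) by rewrite -[q * t]add0n b_runner.
have high_runner i q : i < t -> (n * t).*2 < i + q * t -> a i <= q.
  by move=> lt_it /high; rewrite b_runner //; case: ltnP.
split.
  apply/central_threshold => [|q q' sum_q].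
    by apply: (high_runner 0) => //; nia.
  by have := pairs (q * t) (q' * t) ltac:(nia); rewrite !b0 eqn_pmul2r.
move=> i /andP[i_gt0 lt_it]; apply/complementary_thresholds => [||q q' sum_q].
- by apply: high_runner => //; nia.
- by apply: high_runner; [lia | nia].
have sum_xy : i + q * t + (t - i + q' * t) = (n * t).*2 by nia.
have := pairs _ _ sum_xy; rewrite !b_runner ?(negbTE (runner_pair_neq _ sum_xy)) ?i_gt0; lia.
Qed.

Lemma runner_counts_mirror :
  a 0 = n.+1 -> (forall i, 0 < i < t -> a i + a (t - i) = n.*2) -> mirror_about b (n * t).
Proof.
move=> a0 a_pairs.
have a0_le : a 0 <= n.*2.+1 by lia.
have ai_le i : 0 < i < t -> a i <= n.*2 by move=> i_in; have := a_pairs i i_in; lia.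
have runner_split x : exists q r, x = r + q * t /\ r < t.
  by exists (x %/ t), (x %% t); rewrite addnC -divn_eq ltn_mod.
split=> [x y | x]; have [q [r [-> lt_rt]]] := runner_split x; case: (posnP r) => [-> | r_gt0].
- move=> sum_xy; have le_q : q <= n.*2 by rewrite -(leq_pmul2r t_gt0); lia.
  have -> : y = 0 + (n.*2 - q) * t by rewrite mulnBl; lia.
  rewrite !b_runner // !add0n eqn_pmul2r //.
  exact: (central_threshold a0_le).2 a0 q (n.*2 - q) ltac:(lia).
- move=> sum_xy; have lt_q : q < n.*2 by rewrite -(ltn_pmul2r t_gt0); lia.
  rewrite (negbTE (runner_pair_neq _ sum_xy)) ?r_gt0 //.
  have : q.+1 * t <= n.*2 * t by rewrite leq_pmul2r.
  have -> : y = t - r + (n.*2.-1 - q) * t by rewrite mulnBl -subn1 mulnBl; nia.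
  rewrite !b_runner; try lia.
  have r_in : 0 < r < t by rewrite r_gt0.
  have t_r_in : 0 < t - r < t by lia.
  have := (complementary_thresholds (ai_le r r_in) (ai_le _ t_r_in)).2 (a_pairs r r_in).
  by move/(_ q (n.*2.-1 - q) ltac:(lia)); lia.
- move=> lt_x; have lt_nq : n.*2 < q by rewrite -(ltn_pmul2r t_gt0); lia.
  by rewrite add0n -[q * t]add0n b_runner // a0; lia.
- move=> lt_x; have le_nq : n.*2 <= q by rewrite -ltnS -(ltn_pmul2r t_gt0) mulSn; nia.
  by rewrite b_runner //; have := ai_le r; lia.
Qed.

Lemma mirror_about_runners :
  mirror_about b (n * t) <-> a 0 = n.+1 /\ forall i, 0 < i < t -> a i + a (t - i) = n.*2.
Proof. by split=> [/mirror_runner_counts | [/runner_counts_mirror]]. Qed.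

End MirrorRunners.

(** * Rim hooks *)

Lemma sumn_nth s N : size s <= N -> sumn s = \sum_(0 <= j < N) nth 0 s j.
Proof.
rewrite big_mkord; elim: s N => [|x s IHs] N le_sN.
  by rewrite big1 // => j _; rewrite nth_nil.
by case: N le_sN => // N le_sN; rewrite big_ord_recl /= (IHs N).
Qed.

Lemma sum_hook_window (lr mr : nat -> nat) a c : a <= c ->
  (forall j, a <= j < c -> (mr j).+1 = lr j.+1) ->
  \sum_(a <= j < c.+1) lr j + mr c = lr a + \sum_(a <= j < c.+1) mr j + (c - a).
Proof.
move=> le_ac mid; rewrite big_nat_recl // big_nat_recr //=.
rewrite (eq_big_nat _ _ (F2 := fun j => mr j + 1)) => [|j /mid <-]; last by rewrite addn1.
by rewrite big_split sum_nat_const_nat muln1 /=; lia.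
Qed.

Lemma sumn_hook_window l m a c : a <= c ->
  (forall j, j < a \/ c < j -> nth 0 m j = nth 0 l j) ->
  (forall j, a <= j < c -> (nth 0 m j).+1 = nth 0 l j.+1) ->
  sumn l + nth 0 m c + a = sumn m + nth 0 l a + c.
Proof.
move=> le_ac out mid; set N := size l + size m + c.+1.
have [size_l size_m] : size l <= N /\ size m <= N by rewrite /N; lia.
rewrite (sumn_nth size_l) (sumn_nth size_m).
have split3 s : \sum_(0 <= j < N) nth 0 s j =
    \sum_(0 <= j < a) nth 0 s j + \sum_(a <= j < c.+1) nth 0 s j + \sum_(c.+1 <= j < N) nth 0 s j.
  by rewrite -!big_cat_nat //; rewrite /N; lia.
have same_out lo hi : (forall j, lo <= j < hi -> j < a \/ c < j) ->
    \sum_(lo <= j < hi) nth 0 m j = \sum_(lo <= j < hi) nth 0 l j.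
  by move=> j_out; apply: eq_big_nat => j /j_out /out.
rewrite !split3 (same_out 0 a) => [|j]; last lia.
rewrite (same_out c.+1 N) => [|j]; last lia.
by have := sum_hook_window le_ac mid; lia.
Qed.

(* The hook occupies rows a..c (0-indexed) of the diagram of [lr]; each row
   j < c of [mr] is row j + 1 of [lr] shortened by one box. *)
Definition rim_hook_rows (t : nat) (lr mr : nat -> nat) (a c : nat) : Prop :=
  [/\ a <= c, forall j, j < a \/ c < j -> mr j = lr j,
      forall j, a <= j < c -> (mr j).+1 = lr j.+1,
      lr c.+1 <= mr c < lr c & lr a + c = mr c + a + t].

Lemma eq_rim_hook_rows t lr mr mr' a c :
  mr =1 mr' -> rim_hook_rows t lr mr a c -> rim_hook_rows t lr mr' a c.
Proof.
move=> eq_mr [le_ac out mid bounds len]; rewrite /rim_hook_rows -!eq_mr.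
by split=> // j j_in; rewrite -eq_mr; [apply: out | apply: mid].
Qed.

Lemma in_skewE l m i col : in_skew l m (i, col) = (col < nth 0 l i) && (nth 0 m i <= col).
Proof. by rewrite /in_skew /in_diag -leqNgt. Qed.

Lemma skew_path_rows l m j :
    (forall col, in_skew l m (j, col) -> ~~ in_skew l m (j.+1, col)) ->
  forall p x, x.1 <= j -> in_skew l m x -> path adjacent x p -> all (in_skew l m) p ->
  (last x p).1 <= j.
Proof.
move=> no_cross; elim=> [|y p IHp] x //= le_xj skew_x /andP[adj_xy path_p] /andP[skew_y all_p].
apply: IHp => //; case: x y adj_xy le_xj skew_x skew_y {path_p all_p} => [x1 x2] [y1 y2].
rewrite /adjacent /= => adj_xy le_xj skew_x skew_y; have [//|lt_jy] := leqP y1 j.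
have [ey1 [ey2 ex1]] : y1 = j.+1 /\ y2 = x2 /\ x1 = j by lia.
by subst; have := no_cross x2 skew_x; rewrite skew_y.
Qed.

Lemma size_contained l m : is_partition m -> contained m l -> size m <= size l.
Proof.
move=> m_part le_ml; have [//|lt_lm] := leqP (size m) (size l).
have := nth_partition_gt0 m_part (_ : (size m).-1 < size m); have := le_ml (size m).-1.
by rewrite (nth_default 0 (_ : size l <= (size m).-1)); lia.
Qed.

Section RemoveRimHook.

Variables (t : nat) (l m : seq nat).
Hypotheses (l_part : is_partition l) (rim : remove_rim_hook t l m).

Lemma rim_hook_no_overhang j : nth 0 l j.+1 <= (nth 0 m j).+1.
Proof.
have [m_part _ _ _ no_square] := rim.
rewrite leqNgt; apply/negP => overhang; apply: (no_square j (nth 0 m j)).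
have := nth_partition_anti l_part (leqnSn j); have := nth_partition_anti m_part (leqnSn j).
by rewrite !in_skewE => ? ?; apply/and4P; split; apply/andP; split; lia.
Qed.

Lemma rim_hook_overlap a c j : nth 0 m a < nth 0 l a -> nth 0 m c < nth 0 l c ->
  a <= j < c -> nth 0 m j < nth 0 l j.+1.
Proof.
move=> skew_a skew_c /andP[le_aj lt_jc]; rewrite ltnNge; apply/negP => gap.
have [_ _ _ connected _] := rim.
have skew_end r : nth 0 m r < nth 0 l r -> in_skew l m (r, nth 0 m r).
  by move=> ?; rewrite in_skewE leqnn andbT.
have [p [path_p last_p all_p]] := connected _ _ (skew_end a skew_a) (skew_end c skew_c).
have no_cross col : in_skew l m (j, col) -> ~~ in_skew l m (j.+1, col).
  by rewrite !in_skewE => /andP[_ ?]; apply/negP => /andP[? _]; lia.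
have := skew_path_rows no_cross (x := (a, _)) le_aj (skew_end a skew_a) path_p all_p.
by rewrite last_p /=; lia.
Qed.

Lemma remove_rim_hook_rows : 0 < t -> exists a c, rim_hook_rows t (nth 0 l) (nth 0 m) a c.
Proof.
move=> t_gt0; have [m_part le_ml sum_lm _ _] := rim.
have bounded j : nth 0 m j < nth 0 l j -> j <= size l.
  by case: (leqP j (size l)) => // ?; rewrite (nth_default 0 (_ : size l <= j)) //; lia.
have skew_row : exists j, nth 0 m j < nth 0 l j.
  have [/hasP[j _ ?] | /hasPn same] :=
    boolP (has (fun j => nth 0 m j < nth 0 l j) (iota 0 (size l))); first by exists j.
  have eq_ml j : nth 0 m j = nth 0 l j.
    have [lt_jl | ge_jl] := ltnP j (size l).
      by have := same j; rewrite mem_iota leq0n add0n lt_jl => /(_ isT); have := le_ml j; lia.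
    by have := le_ml j; rewrite (nth_default 0 ge_jl); lia.
  have := sumn_hook_window (leqnn 0) (fun j _ => eq_ml j) (fun j => ltac:(lia)).
  by rewrite eq_ml; lia.
have [a skew_a a_min] := ex_minnP skew_row.
have [c skew_c c_max] := ex_maxnP skew_row bounded.
have le_ac : a <= c by apply: c_max.
have out j : j < a \/ c < j -> nth 0 m j = nth 0 l j.
  move=> j_out; have := le_ml j; have [lt_j|] := ltnP (nth 0 m j) (nth 0 l j); last lia.
  by have := a_min j lt_j; have := c_max j lt_j; lia.
have mid j : a <= j < c -> (nth 0 m j).+1 = nth 0 l j.+1.
  by move=> j_in; have := rim_hook_no_overhang j; have := rim_hook_overlap skew_a skew_c j_in; lia.
exists a, c; split => //.
  have := nth_partition_anti m_part (leqnSn c); rewrite (out c.+1); last by right.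
  by move=> ->.
by have := sumn_hook_window le_ac out mid; lia.
Qed.

End RemoveRimHook.

Lemma antitone_partition (f : nat -> nat) N :
  (forall j, f j.+1 <= f j) -> f N = 0 -> exists m, is_partition m /\ nth 0 m =1 f.
Proof.
move=> f_anti fN; have f_homo := homo_leq_anti f_anti.
have [z /eqP fz z_min] := ex_minnP (ex_intro (fun z => f z == 0) N (introT eqP fN)).
exists (mkseq f z); split=> [|j].
  apply/andP; split; first by apply: homo_sorted (iota_sorted 0 z) => i j /f_homo.
  apply/allP => x /mapP[j]; rewrite mem_iota => lt_jz ->.
  by rewrite lt0n; apply: contraTN lt_jz => /z_min; rewrite -leqNgt.
have [lt_jz | le_zj] := ltnP j z; first by rewrite nth_mkseq.
by rewrite nth_default ?size_mkseq //; have := f_homo _ _ le_zj; lia.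
Qed.

Section RimHookRowsFun.

Variables (t : nat) (l : seq nat) (mr : nat -> nat) (a c : nat).
Hypotheses (l_part : is_partition l) (rows : rim_hook_rows t (nth 0 l) mr a c).

Local Notation lr := (nth 0 l).

Lemma rim_hook_rows_le j : mr j <= lr j.
Proof.
have [_ out mid /andP[_ lt_c] _] := rows; have l_anti := nth_partition_anti l_part.
have [j_out | ] := boolP ((j < a) || (c < j)); first by rewrite out //; apply/orP.
rewrite negb_or -!leqNgt => /andP[le_aj le_jc]; have [lt_jc | le_cj] := ltnP j c.
  by have := mid j; have := l_anti j j.+1 (leqnSn j); lia.
by rewrite (_ : j = c) 1?ltnW //; lia.
Qed.

Lemma rim_hook_rows_step j : lr j.+1 <= (mr j).+1.
Proof.
have [_ out mid /andP[le_c _] _] := rows; have l_anti := nth_partition_anti l_part.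
have [j_out | ] := boolP ((j < a) || (c < j)).
  by rewrite out; [have := l_anti j j.+1 (leqnSn j); lia | apply/orP].
rewrite negb_or -!leqNgt => /andP[le_aj le_jc]; have [lt_jc | le_cj] := ltnP j c.
  by have := mid j; lia.
by rewrite (_ : j = c) 1?ltnW //; lia.
Qed.

Lemma rim_hook_rows_anti j : mr j.+1 <= mr j.
Proof.
have [_ out mid /andP[le_c lt_c] _] := rows; have l_anti := nth_partition_anti l_part.
have [lt_ja | le_aj] := ltnP j a.
  by rewrite (out j) ?(leq_trans (rim_hook_rows_le _)) ?l_anti //; left.
have [lt_cj | le_jc] := ltnP c j.
  by rewrite !out ?l_anti //; right; lia.
have [lt_jc | le_cj] := ltnP j c; last first.
  have -> : j = c by lia.
  by rewrite out //; right.
have [lt_j1c | le_cj1] := ltnP j.+1 c; last first.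
  have := mid j; have -> : j.+1 = c by lia.
  lia.
by have := mid j; have := mid j.+1; have := l_anti j.+1 j.+2 (leqnSn _); lia.
Qed.

Lemma rim_hook_rows_partition : exists m, is_partition m /\ nth 0 m =1 mr.
Proof.
have [_ out _ _ _] := rows.
apply: (antitone_partition rim_hook_rows_anti (N := size l + c.+1)).
by rewrite out ?nth_default //; [lia | right; lia].
Qed.

End RimHookRowsFun.

Definition skew_reach (l m : seq nat) (x y : nat * nat) : Prop :=
  exists p, [/\ path adjacent x p, last x p = y & all (in_skew l m) p].

Lemma adjacent_sym : symmetric adjacent.
Proof.
move=> [x1 x2] [y1 y2]; rewrite /adjacent /= [x1 == y1]eq_sym [x2 == y2]eq_sym.
by rewrite [(x2 == _) || _]orbC [(x1 == _) || _]orbC.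
Qed.

Section SkewReach.

Variables l m : seq nat.

Lemma skew_reach_refl x : skew_reach l m x x.
Proof. by exists [::]. Qed.

Lemma skew_reach_step x y : adjacent x y -> in_skew l m y -> skew_reach l m x y.
Proof. by move=> adj_xy skew_y; exists [:: y]; rewrite /= adj_xy skew_y. Qed.

Lemma skew_reach_trans y x z : skew_reach l m x y -> skew_reach l m y z -> skew_reach l m x z.
Proof.
move=> [p [path_p last_p all_p]] [q [path_q last_q all_q]]; exists (p ++ q).
by rewrite cat_path last_cat last_p all_cat path_p path_q all_p all_q.
Qed.

Lemma skew_reach_sym x y : in_skew l m x -> skew_reach l m x y -> skew_reach l m y x.
Proof.
move=> skew_x [p [path_p <- all_p]]; exists (rev (belast x p)); split.
- by rewrite rev_path (eq_path (e' := adjacent) _) // => u v; rewrite adjacent_sym.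
- by case: p {path_p all_p} => [|z p] //=; rewrite rev_cons last_rcons.
- rewrite all_rev; elim: p x skew_x {path_p} all_p => [|z p IHp] x //= -> /andP[skew_z all_p].
  exact: IHp.
Qed.

Lemma skew_reach_row_end r col :
  nth 0 m r <= col < nth 0 l r -> skew_reach l m (r, col) (r, nth 0 m r).
Proof.
elim: col => [|col IHcol] col_in.
  by rewrite (_ : nth 0 m r = 0); [apply: skew_reach_refl | lia].
have [le_col | lt_col] := leqP col.+1 (nth 0 m r).
  by rewrite (_ : nth 0 m r = col.+1); [apply: skew_reach_refl | lia].
apply: (skew_reach_trans (y := (r, col))); last by apply: IHcol; lia.
by apply: skew_reach_step; rewrite /adjacent /= ?eqxx // in_skewE; lia.
Qed.

End SkewReach.

Section RimHookRowsSeq.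

Variables (t : nat) (l m : seq nat) (a c : nat).
Hypotheses (l_part : is_partition l) (rows : rim_hook_rows t (nth 0 l) (nth 0 m) a c).

Lemma rim_hook_rows_skew_rows r col : in_skew l m (r, col) -> a <= r <= c.
Proof.
have [_ out _ _ _] := rows; rewrite in_skewE => /andP[lt_l le_m].
by apply/negPn/negP; rewrite negb_and -!ltnNge => /orP/out eq_r; move: lt_l; rewrite -eq_r; lia.
Qed.

Lemma skew_reach_hook_end x : in_skew l m x -> skew_reach l m x (c, nth 0 m c).
Proof.
have [_ _ mid _ _] := rows; have m_anti := rim_hook_rows_anti l_part rows.
suff down k r col : r + k = c -> in_skew l m (r, col) -> skew_reach l m (r, col) (c, nth 0 m c).
  case: x => r col skew_x; have /andP[_ le_rc] := rim_hook_rows_skew_rows skew_x.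
  by apply: (down (c - r)) => //; lia.
elim: k r col => [|k IHk] r col sum_r skew_x.
  rewrite addn0 in sum_r; rewrite -sum_r.
  by apply: skew_reach_row_end; rewrite in_skewE andbC in skew_x.
have /andP[le_ar le_rc] := rim_hook_rows_skew_rows skew_x.
apply: (skew_reach_trans (y := (r, nth 0 m r))).
  by apply: skew_reach_row_end; move: skew_x; rewrite in_skewE; lia.
have skew_down : in_skew l m (r.+1, nth 0 m r).
  by rewrite in_skewE; have := mid r; have := m_anti r; lia.
apply: (skew_reach_trans (y := (r.+1, nth 0 m r))).
  by apply: skew_reach_step; rewrite // /adjacent /= !eqxx !orbT.
by apply: IHk skew_down; lia.
Qed.

Lemma rim_hook_rows_connected : skew_connected l m.
Proof.
move=> x y skew_x skew_y; apply: skew_reach_trans (skew_reach_hook_end skew_x) _.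
exact: skew_reach_sym skew_y (skew_reach_hook_end skew_y).
Qed.

Lemma rim_hook_rows_remove : is_partition m -> remove_rim_hook t l m.
Proof.
move=> m_part; have [le_ac out mid _ len] := rows; split=> //.
- exact: rim_hook_rows_le l_part rows.
- by have := sumn_hook_window le_ac out mid; lia.
- exact: rim_hook_rows_connected.
- move=> i j /and4P[+ _ _ +]; rewrite !in_skewE; have := rim_hook_rows_step l_part rows i; lia.
Qed.

End RimHookRowsSeq.

Lemma exists_remove_rim_hook t l mr a c : is_partition l ->
  rim_hook_rows t (nth 0 l) mr a c -> exists m, remove_rim_hook t l m.
Proof.
move=> l_part rows; have [m [m_part eq_m]] := rim_hook_rows_partition l_part rows.
by exists m; apply: rim_hook_rows_remove l_part (eq_rim_hook_rows (fsym eq_m) rows) m_part.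
Qed.

(** * Residue counts and cores *)

Lemma nres_rows t l L r :
  nres t l L r = count (fun j => (nth 0 l j + L - j.+1) %% t == r %% t) (iota 0 L).
Proof. by rewrite /nres -[1]/(1 + 0) iotaDl count_map. Qed.

Lemma count_iota_hook (P : pred nat) a c L : a <= c -> c < L ->
  count P (iota 0 L) =
  count P (iota 0 a) + count P (iota a (c - a)) + P c + count P (iota c.+1 (L - c.+1)).
Proof.
move=> le_ac lt_cL.
have -> : iota 0 L = iota 0 a ++ iota a (c - a) ++ iota c 1 ++ iota c.+1 (L - c.+1).
  have -> : iota 0 L = iota 0 (a + ((c - a) + (1 + (L - c.+1)))) by congr iota; lia.
  by rewrite !iotaD add0n subnKC // addn1.
by rewrite !count_cat /=; lia.
Qed.

Lemma nres_rim_hook_rows t l m L a c r : 0 < t -> c < L ->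
  rim_hook_rows t (nth 0 l) (nth 0 m) a c -> nres t m L r = nres t l L r.
Proof.
move=> t_gt0 lt_cL [le_ac out mid _ len]; rewrite !nres_rows.
set P := fun s j => (nth 0 s j + L - j.+1) %% t == r %% t.
rewrite -/(P m) -/(P l) !(count_iota_hook _ le_ac lt_cL).
have same_out lo n : (forall j, lo <= j < lo + n -> j < a \/ c < j) ->
    count (P m) (iota lo n) = count (P l) (iota lo n).
  by move=> j_out; apply: eq_in_count => j; rewrite mem_iota => /j_out; rewrite /P => /out ->.
rewrite (same_out 0 a) => [|j]; last lia.
rewrite (same_out c.+1 (L - c.+1)) => [|j]; last lia.
have shift : count (P m) (iota a (c - a)) = count (P l) (iota a.+1 (c - a)).
  rewrite -addn1 addnC iotaDl count_map; apply: eq_in_count => j; rewrite mem_iota => j_in.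
  by rewrite /P /= add1n -(mid j) //; lia.
have moved : P m c = P l a.
  by rewrite /P (_ : nth 0 l a + L - a.+1 = (nth 0 m c + L - c.+1) + t) ?modnDr //; lia.
have := erefl (count (P l) (iota a (c - a).+1)).
rewrite {1}(_ : (c - a).+1 = (c - a) + 1) ?iotaD ?count_cat /= -?addnS ?subnKC //; last lia.
rewrite shift moved; lia.
Qed.

Lemma nres_remove_rim_hook t l m L r : 0 < t -> is_partition l -> size l <= L ->
  remove_rim_hook t l m -> nres t m L r = nres t l L r.
Proof.
move=> t_gt0 l_part size_l rim; have [a [c rows]] := remove_rim_hook_rows l_part rim t_gt0.
have [_ _ _ /andP[_ lt_c] _] := rows.
have lt_cl : c < size l by rewrite ltnNge; apply: contraTN lt_c => /(nth_default 0) ->.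
exact: nres_rim_hook_rows t_gt0 (leq_trans lt_cl size_l) rows.
Qed.

Section BeadMove.

Variables (t : nat) (k : seq nat) (L x : nat).
Hypotheses (k_part : is_partition k) (size_k : size k <= L).
Hypotheses (bead_x : 0 < beads_at k L x) (le_tx : t <= x) (no_bead : beads_at k L (x - t) = 0).

(* the bead of row i (0-indexed), i.e. beta k L i.+1 *)
Local Notation B i := (nth 0 k i + L - i.+1).

Lemma bead_move_rim_hook_rows : exists a c mr, rim_hook_rows t (nth 0 k) mr a c.
Proof.
set y := x - t.
have B_neq_y i : i < L -> B i != y.
  move=> lt_iL; move: no_bead; rewrite /beads_at => /eqP; rewrite -leqn0 leqNgt -has_count.
  by move=> /hasPn /(_ i.+1); rewrite mem_iota; apply; lia.
have [a [lt_aL B_a]] : exists a, a < L /\ B a = x.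
  move: bead_x; rewrite /beads_at -has_count => /hasP[j]; rewrite mem_iota => j_in /eqP beta_j.
  have /andP[j_gt0 le_jL] : 0 < j <= L by rewrite -ltnS -add1n.
  by exists j.-1; rewrite -beta_j /beta /part prednK //; split=> //; rewrite prednK.
have lt_yx : y < x.
  by rewrite /y; case: (posnP t) no_bead => [-> | ?]; [rewrite subn0; lia | lia].
have above_y : exists i, (i < L) && (y < B i) by exists a; rewrite lt_aL B_a.
have bounded i : (i < L) && (y < B i) -> i <= L by case/andP => /ltnW.
have [c /andP[lt_cL lt_y_c] c_max] := ex_maxnP above_y bounded.
have le_ac : a <= c by apply: c_max; rewrite lt_aL B_a.
have below_y : c.+1 < L -> B c.+1 < y.
  move=> lt_c1L; have := B_neq_y _ lt_c1L; have [lt_y_c1 _|] := ltnP y (B c.+1); last lia.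
  by have := c_max c.+1; rewrite lt_c1L lt_y_c1 => /(_ isT); lia.
have le_L : L <= y + c.+1.
  by have [/below_y|] := ltnP c.+1 L; lia.
pose mr j := if (j < a) || (c < j) then nth 0 k j
              else if j == c then y + c.+1 - L else (nth 0 k j.+1).-1.
have mr_out j : j < a \/ c < j -> mr j = nth 0 k j by rewrite /mr => /orP ->.
have mr_mid j : a <= j < c -> mr j = (nth 0 k j.+1).-1.
  by move=> j_in; rewrite /mr !ifF //; apply/negbTE; lia.
have mr_c : mr c = y + c.+1 - L by rewrite /mr eqxx ifF //; apply/negbTE; lia.
have k_anti := nth_partition_anti k_part.
exists a, c, mr; split=> //; rewrite ?mr_c.
- move=> j j_in; rewrite mr_mid //; have := k_anti _ _ (_ : j.+1 <= c); lia.
- apply/andP; split; last lia.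
  by have [/below_y|] := ltnP c.+1 L; [lia | move=> ?; rewrite nth_default //; lia].
- lia.
Qed.

End BeadMove.

Lemma core_runners_flush t k L : is_partition k -> size k <= L ->
  (forall m, ~ remove_rim_hook t k m) -> runners_flush t k L.
Proof.
move=> k_part size_k core x bead_x le_tx; rewrite lt0n; apply/negP => /eqP no_bead.
have [a [c [mr rows]]] := bead_move_rim_hook_rows k_part size_k bead_x le_tx no_bead.
by have [m] := exists_remove_rim_hook k_part rows; apply: core.
Qed.

Lemma exists_tcore t l : 0 < t -> exists k, is_tcore t l k.
Proof.
move=> t_gt0; have [N] := ubnP (sumn l); elim: N l => // N IHN l lt_lN.
have [[m rim] | no_hook] := classic (exists m, remove_rim_hook t l m).
  have [_ _ sum_lm _ _] := rim; have [k [reach_k core_k]] := IHN m ltac:(lia).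
  by exists k; split=> //; apply: rhr_step rim reach_k.
by exists l; split=> [|m rim]; [apply: rhr_refl | apply: no_hook; exists m].
Qed.

Lemma rim_hook_reach_nres t l k L : 0 < t -> rim_hook_reach t l k ->
  is_partition l -> size l <= L ->
  [/\ is_partition k, size k <= L & forall r, nres t k L r = nres t l L r].
Proof.
move=> t_gt0; elim=> [// | {}l m {}k rim _ IHreach] l_part size_l.
have [m_part le_ml _ _ _] := rim.
have [k_part size_k nres_k] := IHreach m_part (leq_trans (size_contained m_part le_ml) size_l).
by split=> // r; rewrite nres_k (nres_remove_rim_hook _ t_gt0 l_part size_l rim).
Qed.

Theorem lemma3p4 (t n : nat) (l : seq nat) :
  2 <= t -> 1 <= n -> is_partition l -> size l <= t * n + 1 ->
  (exists k, is_tcore t l k) /\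
  (forall k, is_tcore t l k ->
     (asym100 k <->
      (nres t l (t * n + 1) 0 = n + 1 /\
       forall i, 1 <= i <= t - 1 ->
         nres t l (t * n + 1) i + nres t l (t * n + 1) (t - i) = 2 * n))).
Proof.
move=> le2t _ l_part size_l; have t_gt0 : 0 < t by lia.
split=> [|k [reach_k core_k]]; first exact: exists_tcore.
have [k_part size_k nres_k] := rim_hook_reach_nres t_gt0 reach_k l_part size_l.
have flush_k := core_runners_flush k_part size_k core_k.
have L_gt0 : 0 < t * n + 1 by rewrite addn1.
rewrite asym100_shift_symmetric // (shift_symmetric_beads_from k_part size_k).
rewrite (beads_from_reflect k_part L_gt0) (beads_from_mirror _ L_gt0).
rewrite (_ : (t * n + 1).-1 = n * t); last by rewrite addn1 mulnC.
rewrite (mirror_about_runners n t_gt0 (beads_at_runner k_part flush_k)) nres_k [n + 1]addn1.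
have i_range i : (0 < i < t) = (1 <= i <= t - 1) by rewrite leq_subRL // add1n.
split=> [[-> pairs] | [-> pairs]]; split=> // i.
  by rewrite -i_range mul2n -!nres_k; apply: pairs.
by rewrite i_range -mul2n !nres_k; apply: pairs.
Qed.
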